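(* Let $n\ge2$ and $\mathcal G_n$, $\mathcal N_{0,n}$, $z_g$, $U_m(z_g)$ as in the context. Let $f\in A_{\mathbb C}(\mathcal G_n)$ and suppose there is $m\in\mathbb N$ such that $$f=\sum_{g\in\mathcal N_{0,n}}c_g1_{U_m(z_g)},\qquad c_g\in\mathbb C.$$ If $f(z_e)\neq0$, then $|f(z)|>|f(z_e)|/2^n$ for all $z$ in a set with nonempty interior; in particular $f\notin S_{\mathbb C}(\mathcal G_n)$.
   Context: Let $X=\{\mathbf 0,\mathbf 1\}$, $X^*$ the finite words (with empty word $\varnothing$), $X^\omega$ the infinite words, $C(\eta)=\{\eta w:w\in X^\omega\}$, $\mathbf 1^m$ and $\mathbf 1^\infty$ the finite/infinite words of ones. Fix $n\ge2$, a primitive polynomial $f_n$ of degree $n$ over $\mathbb F_2$ with root $\alpha$, and $\operatorname{Tr}(\beta)=\beta+\beta^2+\dots+\beta^{2^{n-1}}\in\mathbb F_2$. $\mathfrak G_n$ is the group of automorphisms of the binary rooted tree $X^*$ generated by $a$ ($a\cdot(\mathbf 0w)=\mathbf 1w$, $a\cdot(\mathbf 1w)=\mathbf 0w$) and $\iota_n(\beta)$, $\beta\in\mathbb F_{2^n}$, where $\iota_n(\beta)\cdot(\mathbf 0w)=\mathbf 0(a^{\operatorname{Tr}(\beta)}\cdot w)$, $\iota_n(\beta)\cdot(\mathbf 1w)=\mathbf 1(\iota_n(\alpha\beta)\cdot w)$; restrictions $g|_x$ are given by $g\cdot(xw)=(g\cdot x)(g|_x\cdot w)$. $\mathcal N_{0,n}=\iota_n(\mathbb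 F_{2^n})$, $e=\iota_n(0)$. $\mathcal G_n$ is the groupoid of germs of the action of the inverse semigroup $\{(\eta,g,\mu)\}\cup\{0\}$ on $X^\omega$ with $(\eta,g,\mu):C(\mu)\to C(\eta)$, $\mu w\mapsto\eta(g\cdot w)$; germs $[(\eta,g,\mu),w]$, $w\in C(\mu)$, with $[(\eta,g,\mu),w]=[(\eta',g',\mu'),w']$ iff $w=w'$ and some finite prefix $\nu=\mu\epsilon=\mu'\epsilon'$ of $w$ satisfies $\eta(g\cdot\epsilon)=\eta'(g'\cdot\epsilon')$ and $g|_\epsilon=g'|_{\epsilon'}$. $\Theta(s,U)=\{[s,w]:w\in U\}$ for $s=(\eta,g,\mu)$, $U\subseteq C(\mu)$ open; these form a basis of the topology. $z_g=[(\varnothing,g,\varnothing),\mathbf 1^\infty]$ and $U_m(z_g)=\Theta((\varnothing,g,\varnothing),C(\mathbf 1^m))$. $A_{\mathbb C}(\mathcal G_n)$ is the complex Steinberg algebra (span of characteristic functions of compact open bisections), and $S_{\mathbb C}(\mathcal G_n)$ its ideal of singular functions, i.e. those $f$ whose support $\{x:f(x)\neq0\}$ has empty interior. *)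

From HB Require Import structures.
From mathcomp Require Import all_boot all_order all_algebra all_field.
From Stdlib Require Import ClassicalEpsilon.
Set Implicit Arguments. Unset Strict Implicit. Unset Printing Implicit Defensive.
Import Order.TTheory GRing.Theory Num.Theory.
Local Open Scope ring_scope.

Definition primitive_poly_F2 (n : nat) (f : {poly 'F_2}) : Prop :=
  [/\ f \is monic, size f = n.+1, irreducible_poly f,
      f %| 'X^(2 ^ n - 1) - 1
    & forall k : nat, (0 < k < 2 ^ n - 1)%N -> ~~ (f %| 'X^k - 1)].

Definition F2toF (F : finFieldType) (c : 'F_2) : F := (val c)%:R.

Definition trace (n : nat) (F : finFieldType) (b : F) : F :=
  \sum_(i < n) b ^+ (2 ^ i).

(* X = {0,1} is encoded by bool, 0 = false, 1 = true; finite words are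
   seq bool, infinite words are nat -> bool. *)

Definition act_a (w : seq bool) : seq bool :=
  match w with [::] => [::] | x :: w' => (~~ x) :: w' end.

Fixpoint iota_act (n : nat) (F : finFieldType) (alpha : F) (b : F)
    (w : seq bool) : seq bool :=
  match w with
  | [::] => [::]
  | false :: w' => false :: (if trace n b == 1 then act_a w' else w')
  | true :: w' => true :: iota_act n alpha (alpha * b) w'
  end.

Inductive inG (n : nat) (F : finFieldType) (alpha : F) :
    (seq bool -> seq bool) -> Prop :=
  | inG_a : inG n alpha act_a
  | inG_iota (b : F) : inG n alpha (iota_act n alpha b)
  | inG_comp g h : inG n alpha g -> inG n alpha h -> inG n alpha (g \o h)
  | inG_inv g h : inG n alpha g -> cancel g h -> cancel h g -> inG n alpha h.

(* restriction g|_x : g (x v) = (g x) (g|_x v) *)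
Definition restr (g : seq bool -> seq bool) (x : seq bool) (v : seq bool) :=
  drop (size x) (g (x ++ v)).

Definition prefix_of (mu : seq bool) (w : nat -> bool) : Prop :=
  forall i, (i < size mu)%N -> w i = nth false mu i.

(* a representative (eta, g, mu, w) of the germ [(eta,g,mu), w] *)
Record rep := Rep { r_eta : seq bool; r_g : seq bool -> seq bool;
                    r_mu : seq bool; r_w : nat -> bool }.

Definition valid (n : nat) (F : finFieldType) (alpha : F) (r : rep) : Prop :=
  inG n alpha (r_g r) /\ prefix_of (r_mu r) (r_w r).

(* [(eta,g,mu),w] = [(eta',g',mu'),w'] iff w = w' and some finite prefix
   nu = mu eps = mu' eps' of w has eta(g.eps) = eta'(g'.eps') and
   g|_eps = g'|_eps'. *)
Definition germ_eq (r r' : rep) : Prop :=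
  (forall i, r_w r i = r_w r' i) /\
  exists k : nat,
    [/\ (size (r_mu r) <= k)%N, (size (r_mu r') <= k)%N &
     let nu := mkseq (r_w r) k in
     let e := drop (size (r_mu r)) nu in
     let e' := drop (size (r_mu r')) nu in
     r_eta r ++ r_g r e = r_eta r' ++ r_g r' e' /\
     forall v, restr (r_g r) e v = restr (r_g r') e' v].

Definition open_cantor (U : (nat -> bool) -> Prop) : Prop :=
  forall w, U w -> exists k : nat, forall w',
    (forall i, (i < k)%N -> w' i = w i) -> U w'.

Definition Theta (eta : seq bool) (g : seq bool -> seq bool) (mu : seq bool)
    (U : (nat -> bool) -> Prop) (r : rep) : Prop :=
  exists w, U w /\ germ_eq r (Rep eta g mu w).

Definition basic_ok (n : nat) (F : finFieldType) (alpha : F)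
    (eta : seq bool) (g : seq bool -> seq bool) (mu : seq bool)
    (U : (nat -> bool) -> Prop) : Prop :=
  inG n alpha g /\ open_cantor U /\ (forall w, U w -> prefix_of mu w).

Definition openG (n : nat) (F : finFieldType) (alpha : F) (B : rep -> Prop)
  : Prop :=
  forall r, B r -> valid n alpha r /\
    exists eta g mu U, [/\ basic_ok n alpha eta g mu U, Theta eta g mu U r &
      forall r', valid n alpha r' -> Theta eta g mu U r' -> B r'].

Definition nonempty_interior (n : nat) (F : finFieldType) (alpha : F)
    (A : rep -> Prop) : Prop :=
  exists B, [/\ openG n alpha B, exists r, B r & forall r, B r -> A r].

Definition supp (n : nat) (F : finFieldType) (alpha : F)
    (C : numClosedFieldType) (f : rep -> C) : rep -> Prop :=
  fun r => valid n alpha r /\ f r != 0.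

Definition singular (n : nat) (F : finFieldType) (alpha : F)
    (C : numClosedFieldType) (f : rep -> C) : Prop :=
  ~ nonempty_interior n alpha (supp n alpha f).

Definition z_ (g : seq bool -> seq bool) : rep := Rep [::] g [::] (fun _ => true).

Definition U_m (n : nat) (F : finFieldType) (alpha : F) (m : nat)
    (g : seq bool -> seq bool) (r : rep) : Prop :=
  valid n alpha r /\ Theta [::] g [::] (prefix_of (nseq m true)) r.

Definition indic (C : numClosedFieldType) (P : Prop) : C :=
  if excluded_middle_informative P then 1 else 0.

(* On the cylinder of germs of iota(d) at the points of C(1^k 0), k >= m,
   a germ lies in U_m(z_{iota(b)}) exactly when iota(b) and iota(d) act alike after
   1^k 0, i.e. when Tr(alpha^k b) = Tr(alpha^k d); so there f equals the partial sum
   S(g, t) of the c_b over {b | Tr(g b) = t}, with g = alpha^k. As alpha generates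
   F^*, every g <> 0 and every t occur. Summing the characters (-1)^Tr(g b) over all g
   isolates c_0 = f(z_e), which gives |c_0| <= 2 max_{g <> 0, t} |S(g, t)|; since
   2^n > 2, some S(g, t) exceeds |c_0| / 2^n, and f does so on a whole open set. *)

From HB Require Import structures.
From Stdlib Require Import ClassicalEpsilon.
From mathcomp Require Import all_boot all_order all_algebra all_field.
Set Implicit Arguments.
Unset Strict Implicit.
Unset Printing Implicit Defensive.
Import Order.TTheory GRing.Theory Num.Theory.
Local Open Scope ring_scope.

Section TraceForm.
Variables (n : nat) (F : finFieldType).
Hypothesis cardF : #|F| = (2 ^ n)%N.

Lemma pchar2_F : 2 \in [pchar F].
Proof. exact: card_finPcharP cardF _. Qed.

Lemma log2_card_gt0 : (0 < n)%N.
Proof.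
rewrite lt0n; apply: contraTneq (card_finNzRing_gt1 F) => n0.
by rewrite cardF n0.
Qed.

Lemma exprD_pow2 i (x y : F) : (x + y) ^+ (2 ^ i) = x ^+ (2 ^ i) + y ^+ (2 ^ i).
Proof.
by rewrite exprDn_pchar // pnatX (eq_pnat _ (pcharf_eq pchar2_F)) pnat_id.
Qed.

Lemma traceD (x y : F) : trace n (x + y) = trace n x + trace n y.
Proof. by rewrite /trace -big_split; apply: eq_bigr => i _; rewrite exprD_pow2. Qed.

Lemma trace0 : trace n (0 : F) = 0.
Proof. by rewrite /trace big1 // => i _; rewrite expr0n expn_eq0. Qed.

Lemma trace_sqr (x : F) : trace n x ^+ 2 = trace n x.
Proof.
have -> : trace n x ^+ 2 = \sum_(i < n) x ^+ (2 ^ i.+1).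
  rewrite /trace -(pFrobenius_autE pchar2_F) rmorph_sum.
  by apply: eq_bigr => i _; rewrite expnSr exprM.
apply: (addrI x); rewrite [RHS]addrC.
have := big_ord_recl n (fun i => x ^+ (2 ^ i)); rewrite expr1 => <-.
by rewrite big_ord_recr /= -cardF expf_card.
Qed.

Lemma trace_eq01 (x : F) : trace n x = 0 \/ trace n x = 1.
Proof.
have : trace n x * (trace n x - 1) = 0 by rewrite mulrBr mulr1 -expr2 trace_sqr subrr.
by move/eqP; rewrite mulf_eq0 subr_eq0 => /orP[] /eqP; [left|right].
Qed.

Lemma exists_trace1 : exists x : F, trace n x = 1.
Proof.
case: (pickP [pred x : F | trace n x == 1]) => [x /eqP|trace_ne1]; first by exists x.
have trace_eq0 (x : F) : trace n x = 0.
  by case: (trace_eq01 x) => // tr1; move: (trace_ne1 x); rewrite /= tr1 eqxx.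
have [k n_eq] : exists k, n = k.+1 by exists n.-1; rewrite prednK // log2_card_gt0.
pose p : {poly F} := \sum_(i < n) 'X^(2 ^ i).
have size_p : size p = (2 ^ k).+1.
  rewrite /p n_eq; elim: k {n_eq} => [|k IH]; first by rewrite big_ord1 size_polyXn.
  by rewrite big_ord_recr /= addrC size_polyDl size_polyXn // IH ltnS ltn_exp2l.
have : (size (enum F) < size p)%N.
  apply: max_poly_roots; last exact: enum_uniq.
    by rewrite -size_poly_eq0 size_p.
  apply/allP => x _; rewrite /root /p horner_sum -[X in _ == X](trace_eq0 x).
  by apply/eqP/eq_bigr => i _; rewrite hornerXn.
by rewrite -cardE cardF size_p n_eq ltnS leqNgt ltn_exp2l // ltnSn.
Qed.

Definition trace_sign (C : numDomainType) (x : F) : C := (-1) ^+ (trace n x == 1).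

Lemma sum_trace_sign_mulr (C : numDomainType) (b : F) :
  b != 0 -> \sum_(g : F) trace_sign C (g * b) = 0.
Proof.
move=> b_neq0; set S := \sum_(g : F) trace_sign C g.
have -> : \sum_(g : F) trace_sign C (g * b) = S by rewrite [RHS](reindex_inj (mulIf b_neq0)).
have [x1 tr_x1] := exists_trace1.
have shift (g : F) : trace_sign C (g + x1) = - trace_sign C g.
  have one_neq0 : ((1 : F) == 0) = false by rewrite oner_eq0.
  rewrite /trace_sign traceD tr_x1.
  case: (trace_eq01 g) => ->; first by rewrite add0r eqxx eq_sym one_neq0 expr1 expr0.
  by rewrite (addrr_pchar2 pchar2_F) eqxx eq_sym one_neq0 expr0 expr1 opprK.
have S_opp : S = - S by rewrite {1}/S (reindex_inj (addIr x1)) -sumrN; apply: eq_bigr => g _.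
have : S *+ 2 == 0 by rewrite mulr2n {1}S_opp addNr.
by rewrite mulrn_eq0 => /eqP.
Qed.

Lemma exists_trace_mul_eq (g : F) (t : bool) :
  g != 0 -> exists d, (trace n (g * d) == 1) = t.
Proof.
move=> g_neq0; case: t; last by exists 0; rewrite mulr0 trace0 eq_sym oner_eq0.
have [x1 tr_x1] := exists_trace1.
by exists (x1 / g); rewrite mulrC divfK // tr_x1 eqxx.
Qed.

End TraceForm.

Section PrimitiveElement.
Variables (n : nat) (F : finFieldType) (fn : {poly 'F_2}) (alpha : F).
Hypotheses (cardF : #|F| = (2 ^ n)%N) (fn_prim : primitive_poly_F2 n fn).
Hypothesis alpha_root : root (map_poly (@F2toF F) fn) alpha.

Lemma F2toF_is_zmod_morphism : zmod_morphism (@F2toF F).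
Proof.
have two0 : (2%:R : F) = 0 by apply/eqP; case/andP: (pchar2_F cardF).
have opp1 : (-1 : F) = 1 by apply/eqP; rewrite -subr_eq0 -opprD -[1 + 1]/(2%:R) two0 oppr0.
by case=> [[|[|]]] // ? [[|[|]]] //= ?; rewrite /F2toF /= ?subr0 ?sub0r ?subrr ?opp1.
Qed.

Lemma F2toF_is_monoid_morphism : monoid_morphism (@F2toF F).
Proof.
split=> // - [[|[|]]] // ? [[|[|]]] //= ?.
all: by rewrite /F2toF /= ?mulr0 ?mul0r ?mulr1.
Qed.

HB.instance Definition _ := GRing.isZmodMorphism.Build _ _ (@F2toF F) F2toF_is_zmod_morphism.
HB.instance Definition _ := GRing.isMonoidMorphism.Build _ _ (@F2toF F) F2toF_is_monoid_morphism.

Local Notation N := (2 ^ n - 1)%N.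

Lemma map_poly_Xn_sub1 k : map_poly (@F2toF F) ('X^k - 1) = 'X^k - 1.
Proof. by rewrite rmorphB /= map_polyXn rmorph1. Qed.

Lemma alpha_primitive_root : N.-primitive_root alpha.
Proof.
case: fn_prim => _ _ fn_irr fn_dvd fn_ndvd.
have N_gt0 : (0 < N)%N by rewrite subn_gt0 -{1}(expn0 2) ltn_exp2l // (log2_card_gt0 cardF).
apply/andP; split=> //; apply/forallP => i; rewrite unity_rootE.
case: (i.+1 =P N) => [->|i_neq].
  have : map_poly (@F2toF F) fn %| map_poly (@F2toF F) ('X^N - 1) by rewrite dvdp_map.
  move/root_dvdp/(_ alpha_root).
  by rewrite map_poly_Xn_sub1 rootE !hornerE subr_eq0 => ->.
rewrite eqbF_neg; apply/negP => /eqP alpha_i.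
have : coprimep fn ('X^(i.+1) - 1).
  rewrite irreducible_poly_coprime // fn_ndvd //=.
  by rewrite ltn_neqAle ltn_ord andbT; apply/eqP.
rewrite -(coprimep_map (@F2toF F)) => /coprimep_root/(_ alpha_root).
by rewrite map_poly_Xn_sub1 !hornerE alpha_i subrr eqxx.
Qed.

Lemma nonzero_eq_alpha_exp (g : F) K : g != 0 -> exists j, g = alpha ^+ (K + j).
Proof.
move=> g_neq0; have alpha_prim := alpha_primitive_root.
have gN : g ^+ N = 1.
  apply: (mulIf g_neq0); rewrite mul1r -exprSr subn1 prednK ?expn_gt0 //.
  by rewrite -cardF expf_card.
have [i ->] := prim_rootP alpha_prim gN.
exists (i + K * N.-1)%N.
rewrite addnCA -mulnS prednK ?(prim_order_gt0 alpha_prim) // mulnC exprD exprM.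
by rewrite (prim_expr_order alpha_prim) expr1n mulr1.
Qed.

End PrimitiveElement.

Section LargeTracePart.
Variables (n : nat) (F : finFieldType) (C : numDomainType) (c : F -> C).
Hypothesis cardF : #|F| = (2 ^ n)%N.

Definition trace_part (g : F) (t : bool) : C :=
  \sum_(b : F) c b * ((trace n (g * b) == 1) == t)%:R.

Definition trace_transform (g : F) : C := \sum_(b : F) c b * trace_sign n C (g * b).

Lemma trace_transformE g : trace_transform g = trace_part g false - trace_part g true.
Proof.
rewrite /trace_transform /trace_part -sumrB; apply: eq_bigr => b _.
by rewrite /trace_sign -mulrBr; case: (_ == 1); rewrite /= ?subr0 ?sub0r.
Qed.

Lemma trace_transform0 : trace_transform 0 = trace_part 1 false + trace_part 1 true.
Proof.
rewrite /trace_transform /trace_part -big_split; apply: eq_bigr => b _.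
rewrite /= mul0r mul1r /trace_sign trace0 eq_sym oner_eq0 -mulrDr.
by case: (_ == 1); rewrite /= ?addr0 ?add0r.
Qed.

Lemma sum_trace_transform : \sum_(g : F) trace_transform g = c 0 *+ #|F|.
Proof.
rewrite /trace_transform exchange_big (bigD1 0) //= [X in _ + X]big1 ?addr0 => [|b b_neq0].
  under eq_bigr do rewrite mulr0 /trace_sign trace0 eq_sym oner_eq0 /= expr0 mulr1.
  by rewrite sumr_const.
by rewrite -mulr_sumr sum_trace_sign_mulr ?mulr0.
Qed.

Lemma norm_le_trace_part (M : C) :
  (forall g t, g != 0 -> `|trace_part g t| <= M) -> `|c 0| <= M *+ 2.
Proof.
move=> part_le.
have transform_le g : `|trace_transform g| <= M *+ 2.
  rewrite mulr2n; have [->|g_neq0] := eqVneq g 0.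
    by rewrite trace_transform0 (le_trans (ler_normD _ _)) // lerD ?part_le ?oner_neq0.
  by rewrite trace_transformE (le_trans (ler_normB _ _)) // lerD ?part_le.
have card_gt0 : (0 < #|F|)%N by rewrite cardF expn_gt0.
rewrite -(ler_pMn2r card_gt0) -normrMn -sum_trace_transform.
apply: le_trans (ler_norm_sum _ _ _) _.
by rewrite -sumr_const ler_sum.
Qed.

Lemma exists_large_trace_part (M : C) : 0 <= M -> M *+ 2 < `|c 0| ->
  exists g t, g != 0 /\ M < `|trace_part g t|.
Proof.
move=> M_ge0 M2_lt.
have /existsP[g /existsP[t /andP[g_neq0 large]]] :
    [exists g : F, exists t : bool, (g != 0) && (M < `|trace_part g t|)].
  apply: contraLR M2_lt => /existsPn none.
  rewrite -real_leNgt ?ger0_real ?mulrn_wge0 //; apply: norm_le_trace_part => g t g_neq0.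
  by have /existsPn/(_ t) := none g; rewrite g_neq0 -real_leNgt ?ger0_real.
by exists g, t.
Qed.

End LargeTracePart.

Definition tree_morph (g : seq bool -> seq bool) : Prop :=
  (forall u, size (g u) = size u) /\ (forall u v, take (size u) (g (u ++ v)) = g u).

Lemma tree_morph_act_a : tree_morph act_a.
Proof.
split=> [[]|[|x u] v] //=; first by rewrite take0.
by rewrite take_size_cat.
Qed.

Lemma tree_morph_comp g h : tree_morph g -> tree_morph h -> tree_morph (g \o h).
Proof.
move=> [size_g take_g] [size_h take_h]; split=> [u|u v] /=; first by rewrite size_g size_h.
by rewrite -[h (u ++ v)](cat_take_drop (size u)) take_h -(size_h u) take_g.
Qed.

Lemma tree_morph_can g h : tree_morph g -> cancel g h -> cancel h g -> tree_morph h.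
Proof.
move=> [size_g take_g] gK hK.
have size_h u : size (h u) = size u by rewrite -{2}(hK u) size_g.
split=> // u v; set z := h (u ++ v).
have size_take : size (take (size u) z) = size u.
  by rewrite size_takel // size_h size_cat leq_addr.
have g_take : g (take (size u) z) = u.
  by rewrite -(take_g _ (drop (size u) z)) cat_take_drop hK size_take take_size_cat.
by rewrite -[in RHS]g_take gK.
Qed.

Lemma tree_morph_iota_act n (F : finFieldType) (alpha b : F) :
  tree_morph (iota_act n alpha b).
Proof.
split=> [u|u v].
  elim: u b => [|[] u IH] b //=; first by rewrite IH.
  by case: ifP => // _; case: u {IH}.
elim: u b => [|[] u IH] b /=; first by rewrite take0.
  by rewrite IH.
case: ifP => _; last by rewrite take_size_cat.
by case: u {IH} => [|x u] /=; rewrite ?take0 ?take_size_cat.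
Qed.

Lemma inG_tree_morph n (F : finFieldType) (alpha : F) g :
  inG n alpha g -> tree_morph g.
Proof.
elim=> [|b|g1 g2 _ t1 _ t2|g1 g2 _ t1 g1K g2K].
- exact: tree_morph_act_a.
- exact: tree_morph_iota_act.
- exact: tree_morph_comp.
- exact: tree_morph_can g1K g2K.
Qed.

Lemma tree_morph_cat g u v : tree_morph g -> g (u ++ v) = g u ++ restr g u v.
Proof. by case=> _ take_g; rewrite /restr -(take_g u v) cat_take_drop. Qed.

Lemma tree_morph_take g k u : tree_morph g -> take k (g u) = g (take k u).
Proof.
move=> [size_g take_g]; case: (leqP k (size u)) => [k_le|k_gt].
  by rewrite -{1}(cat_take_drop k u) -{1}(size_takel k_le) take_g.
by rewrite !take_oversize ?size_g // ltnW.
Qed.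

Lemma restr_cat g u x v : restr g (u ++ x) v = drop (size x) (restr g u (x ++ v)).
Proof. by rewrite /restr drop_drop size_cat catA addnC. Qed.

Lemma drop_catl T k (s1 s2 : seq T) :
  (k <= size s1)%N -> drop k (s1 ++ s2) = drop k s1 ++ s2.
Proof.
rewrite drop_cat; case: ltngtP => // k_eq _.
by rewrite k_eq subnn drop0 drop_size.
Qed.

Lemma take_mkseq T (w : nat -> T) k K : (k <= K)%N -> take k (mkseq w K) = mkseq w k.
Proof. by move=> k_le; rewrite -map_take take_iota (minn_idPl k_le). Qed.

Lemma mkseq_const T (x : T) K : mkseq (fun=> x) K = nseq K x.
Proof. by elim: K => // K IH; rewrite mkseqS IH; elim: K {IH} => //= K ->. Qed.

Lemma mkseq_prefix_of s w : prefix_of s w -> mkseq w (size s) = s.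
Proof.
move=> s_w; apply: (@eq_from_nth _ false); rewrite ?size_mkseq // => i i_lt.
by rewrite nth_mkseq // s_w.
Qed.

Lemma open_cantor_prefix_of s : open_cantor (prefix_of s).
Proof. by move=> w s_w; exists (size s) => w' w'_w i i_lt; rewrite w'_w // s_w. Qed.

(* [germ_eq r r'] unfolds to [r_w r =1 r_w r' /\ exists k, germ_agree (r_w r) k r r']. *)
Definition germ_agree (w : nat -> bool) (k : nat) (r r' : rep) : Prop :=
  [/\ (size (r_mu r) <= k)%N, (size (r_mu r') <= k)%N &
     let nu := mkseq w k in
     let e := drop (size (r_mu r)) nu in
     let e' := drop (size (r_mu r')) nu in
     r_eta r ++ r_g r e = r_eta r' ++ r_g r' e' /\
     forall v, restr (r_g r) e v = restr (r_g r') e' v].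

Lemma germ_agree_sym w k r r' : germ_agree w k r r' -> germ_agree w k r' r.
Proof. by case=> ? ? [eq_nu eq_restr]; split=> //; split=> [|v]; rewrite ?eq_nu ?eq_restr. Qed.

Lemma germ_agree_trans w k r1 r2 r3 :
  germ_agree w k r1 r2 -> germ_agree w k r2 r3 -> germ_agree w k r1 r3.
Proof.
case=> ? _ [eq12 restr12] [_ ? [eq23 restr23]].
by split=> //; split=> [|v]; rewrite ?eq12 ?eq23 ?restr12 ?restr23.
Qed.

Lemma eq_germ_agree w w' k r r' : w =1 w' -> germ_agree w k r r' -> germ_agree w' k r r'.
Proof. by move=> eq_w; rewrite /germ_agree (eq_mkseq eq_w). Qed.

Lemma germ_agree_le w k k' r r' : (k <= k')%N -> germ_agree w k r r' ->
  tree_morph (r_g r) -> tree_morph (r_g r') -> germ_agree w k' r r'.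
Proof.
move=> k_le [mu_le mu'_le [eq_nu eq_restr]] morph_r morph_r'.
have mu_le' := leq_trans mu_le k_le; have mu'_le' := leq_trans mu'_le k_le.
split=> //=; set x := drop k (mkseq w k').
have -> : mkseq w k' = mkseq w k ++ x by rewrite -(take_mkseq w k_le) cat_take_drop.
rewrite !drop_catl ?size_mkseq //; split=> [|v].
  by rewrite (tree_morph_cat _ _ morph_r) (tree_morph_cat _ _ morph_r') !catA eq_nu eq_restr.
by rewrite !restr_cat eq_restr.
Qed.

Lemma germ_eq_refl r : germ_eq r r.
Proof. by split=> //; exists (size (r_mu r)). Qed.

Lemma germ_eq_sym r r' : germ_eq r r' -> germ_eq r' r.
Proof.
move=> [eq_w [k agree]]; split=> [i|]; first by rewrite eq_w.
by exists k; apply: eq_germ_agree eq_w (germ_agree_sym agree).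
Qed.

Lemma germ_eq_trans r1 r2 r3 : germ_eq r1 r2 -> germ_eq r2 r3 ->
  tree_morph (r_g r1) -> tree_morph (r_g r2) -> tree_morph (r_g r3) -> germ_eq r1 r3.
Proof.
move=> [eq12 [k1 agree12]] [eq23 [k2 agree23]] morph1 morph2 morph3.
split=> [i|]; first by rewrite eq12 eq23.
exists (maxn k1 k2); apply: (@germ_agree_trans _ _ _ r2).
  exact: germ_agree_le (leq_maxl _ _) agree12 morph1 morph2.
apply: eq_germ_agree (fun i => esym (eq12 i)) _.
exact: germ_agree_le (leq_maxr _ _) agree23 morph2 morph3.
Qed.

Lemma prefix_of_cat s s' w : prefix_of (s ++ s') w -> prefix_of s w.
Proof.
by move=> ss'_w i i_lt; rewrite ss'_w ?nth_cat ?i_lt // size_cat (leq_trans i_lt) ?leq_addr.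
Qed.

Lemma indic_iff {C : numClosedFieldType} (P : Prop) (b : bool) :
  (P <-> b) -> indic C P = b%:R.
Proof.
move=> P_b; rewrite /indic; case: excluded_middle_informative => [p|np].
  by rewrite (P_b.1 p).
by case: b P_b => // - [_ /(_ isT)].
Qed.

Section GermCylinders.
Variables (n : nat) (F : finFieldType) (alpha : F).

Definition germ_cylinder (g : seq bool -> seq bool) (s : seq bool) (r : rep) : Prop :=
  valid n alpha r /\ Theta [::] g [::] (prefix_of s) r.

Lemma nonempty_interior_germ_cylinder g s :
  inG n alpha g -> nonempty_interior n alpha (germ_cylinder g s).
Proof.
move=> g_in; exists (germ_cylinder g s); split=> //.
- move=> r r_in; split; first exact: r_in.1.
  exists [::], g, [::], (prefix_of s); split=> //; last exact: r_in.2.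
  by split=> //; split; [exact: open_cantor_prefix_of | move=> w _ i].
- exists (Rep [::] g [::] (nth false s)); split; first by split.
  by exists (nth false s); split; last exact: germ_eq_refl.
Qed.

Lemma nonempty_interior_not_singular (C : numClosedFieldType) (f : rep -> C) A :
  nonempty_interior n alpha A -> (forall r, A r -> f r != 0) -> ~ singular n alpha f.
Proof.
move=> [B [B_open B_nonempty B_A]] A_f; apply; exists B; split=> // r B_r.
by split; [exact: (B_open r B_r).1 | exact/A_f/B_A].
Qed.

End GermCylinders.

Section CylinderMembership.
Variables (n : nat) (F : finFieldType) (alpha : F).
Local Notation iota := (iota_act n alpha).

Lemma iota_act_ones b K v :
  iota b (nseq K true ++ v) = nseq K true ++ iota (alpha ^+ K * b) v.
Proof.
by elim: K b => [|K IH] b /=; rewrite ?expr0 ?mul1r // IH exprSr mulrA.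
Qed.

Lemma restr_iota_act_ones b K v : restr (iota b) (nseq K true) v = iota (alpha ^+ K * b) v.
Proof. by rewrite /restr iota_act_ones drop_size_cat // size_nseq. Qed.

Lemma iota_act_ones_false b k v :
  iota b (nseq k true ++ false :: v) =
  nseq k true ++ false :: (if trace n (alpha ^+ k * b) == 1 then act_a v else v).
Proof. by rewrite iota_act_ones. Qed.

Lemma restr_iota_act_ones_false b k v :
  restr (iota b) (nseq k true ++ [:: false]) v =
  if trace n (alpha ^+ k * b) == 1 then act_a v else v.
Proof.
rewrite /restr -catA iota_act_ones_false size_cat size_nseq addn1 -cat_rcons.
by rewrite drop_size_cat // size_rcons size_nseq.
Qed.

Lemma iota_act_ones_false_inj b d k x :
  iota b (nseq k true ++ [:: false; x]) = iota d (nseq k true ++ [:: false; x]) ->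
  (trace n (alpha ^+ k * b) == 1) = (trace n (alpha ^+ k * d) == 1).
Proof.
rewrite !iota_act_ones_false => /(congr1 (drop k.+1)).
rewrite -!cat_rcons !drop_size_cat ?size_rcons ?size_nseq //.
by case: (_ == 1); case: (_ == 1); case: x.
Qed.

Lemma U_m_germ_cylinder m k b d r : (m <= k)%N ->
  germ_cylinder n alpha (iota d) (nseq k true ++ [:: false]) r ->
  U_m n alpha m (iota b) r <->
  (trace n (alpha ^+ k * b) == 1) = (trace n (alpha ^+ k * d) == 1).
Proof.
move=> m_le [r_valid [w [w_prefix r_d]]].
have morph_r := inG_tree_morph r_valid.1.
have morph_iota := @tree_morph_iota_act n F alpha.
have mkseq_k1 : mkseq w k.+1 = nseq k true ++ [:: false].
  by rewrite -(mkseq_prefix_of w_prefix) size_cat size_nseq addn1.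
split=> [[_ [w' [_ r_b]]]|bits_eq].
  have [_ [K agree]] := germ_eq_trans (germ_eq_sym r_d) r_b (morph_iota d) morph_r (morph_iota b).
  have [_ _ /= [eq_iota _]] := germ_agree_le (leq_maxl K k.+2) agree (morph_iota d) (morph_iota b).
  move: eq_iota; rewrite drop0 => /(congr1 (take k.+2)).
  rewrite !tree_morph_take // take_mkseq ?leq_maxr // mkseqS mkseq_k1 rcons_cat.
  by move/iota_act_ones_false_inj ->.
split=> //; exists w; split.
  by apply: (@prefix_of_cat _ (nseq (k - m) true ++ [:: false])); rewrite catA -nseqD subnKC.
have d_b : germ_eq (Rep [::] (iota d) [::] w) (Rep [::] (iota b) [::] w).
  split=> //; exists k.+1; split=> //; rewrite mkseq_k1 /= drop0.
  split=> [|v]; first by rewrite !iota_act_ones_false /= !if_same.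
  by rewrite !restr_iota_act_ones_false bits_eq.
exact: germ_eq_trans r_d d_b morph_r (morph_iota d) (morph_iota b).
Qed.

Lemma sum_indic_U_m_germ_cylinder (C : numClosedFieldType) (c : F -> C) m k d r :
  (m <= k)%N -> germ_cylinder n alpha (iota d) (nseq k true ++ [:: false]) r ->
  \sum_(b : F) c b * indic C (U_m n alpha m (iota b) r) =
  trace_part n c (alpha ^+ k) (trace n (alpha ^+ k * d) == 1).
Proof.
move=> m_le r_in; apply: eq_bigr => b _.
by rewrite (indic_iff (iff_trans (U_m_germ_cylinder b m_le r_in) (rwP eqP))).
Qed.

Variable fn : {poly 'F_2}.
Hypotheses (cardF : #|F| = (2 ^ n)%N) (fn_prim : primitive_poly_F2 n fn).
Hypothesis alpha_root : root (map_poly (@F2toF F) fn) alpha.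

Lemma z_e_in_U_m m b : U_m n alpha m (iota b) (z_ (iota 0)) <-> b = 0.
Proof.
split=> [[_ [w' [_ [_ [K [_ _ /= [_ eq_restr]]]]]]]|->].
  apply/eqP/negPn/negP => b_neq0.
  have [x1 tr_x1] := exists_trace1 cardF.
  have x1_neq0 : x1 != 0 by apply: contra_eq_neq tr_x1 => ->; rewrite trace0 eq_sym oner_neq0.
  have [j x1_eq] := nonzero_eq_alpha_exp cardF fn_prim alpha_root K
    (mulf_neq0 x1_neq0 (invr_neq0 b_neq0)).
  (* The restrictions iota(0) and iota(alpha^K b) to 1^K must agree, but the second
     one flips the letter after 1^j 0 since Tr(alpha^(K+j) b) = 1. *)
  have := eq_restr (nseq j true ++ [:: false; false]).
  rewrite drop0 mkseq_const !restr_iota_act_ones => /iota_act_ones_false_inj.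
  rewrite !mulr0 trace0 eq_sym oner_eq0 mulrA -exprD addnC -x1_eq divfK //.
  by rewrite tr_x1 eqxx.
split; first by split; [exact: inG_iota | move=> ? ?].
by exists (fun _ => true); split; [move=> i; rewrite size_nseq nth_nseq => -> | exact: germ_eq_refl].
Qed.

Lemma sum_indic_U_m_z_e (C : numClosedFieldType) (c : F -> C) m :
  \sum_(b : F) c b * indic C (U_m n alpha m (iota b) (z_ (iota 0))) = c 0.
Proof.
have indic_b b := indic_iff (iff_trans (z_e_in_U_m m b) (rwP eqP)).
rewrite (bigD1 0) //= big1 => [|b b_neq0]; first by rewrite indic_b eqxx mulr1 addr0.
by rewrite indic_b (negbTE b_neq0) mulr0.
Qed.

End CylinderMembership.

Theorem mainTheorem11 (n : nat) (F : finFieldType) (C : numClosedFieldType)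
    (fn : {poly 'F_2}) (alpha : F) (m : nat) (c : F -> C) (f : rep -> C) :
  (2 <= n)%N -> #|F| = (2 ^ n)%N -> primitive_poly_F2 n fn ->
  poly.root (map_poly (@F2toF F) fn) alpha ->
  (forall r, f r = \sum_(b : F) c b * indic C (U_m n alpha m (iota_act n alpha b) r)) ->
  f (z_ (iota_act n alpha 0)) != 0 ->
  (exists A : rep -> Prop, nonempty_interior n alpha A /\
     forall z, A z -> `|f (z_ (iota_act n alpha 0))| / 2%:R ^+ n < `|f z|)
  /\ ~ singular n alpha f.
Proof.
move=> n_ge2 cardF fn_prim alpha_root f_def fze_neq0.
have f_ze : f (z_ (iota_act n alpha 0)) = c 0.
  by rewrite f_def (sum_indic_U_m_z_e cardF fn_prim alpha_root).
set eps := `|f _| / _.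
have eps_ge0 : 0 <= eps by rewrite divr_ge0 ?exprn_ge0 ?ler0n.
have eps2_lt : eps *+ 2 < `|c 0|.
  have two_exp_gt0 : (0 : C) < 2%:R ^+ n by rewrite exprn_gt0 ?ltr0n.
  rewrite /eps f_ze -mulr_natr mulrAC ltr_pdivrMr // ltr_pM2l ?normr_gt0 -?f_ze //.
  by rewrite -natrX ltr_nat -{1}(expn1 2) ltn_exp2l.
have [g [t [g_neq0 large]]] := exists_large_trace_part cardF eps_ge0 eps2_lt.
have [d tr_d] := exists_trace_mul_eq cardF t g_neq0.
have [j g_eq] := nonzero_eq_alpha_exp cardF fn_prim alpha_root m g_neq0.
pose A := germ_cylinder n alpha (iota_act n alpha d) (nseq (m + j) true ++ [:: false]).
have A_large r : A r -> eps < `|f r|.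
  by move=> A_r; rewrite f_def (sum_indic_U_m_germ_cylinder _ (leq_addr j m) A_r) -g_eq tr_d.
have A_interior : nonempty_interior n alpha A.
  exact/nonempty_interior_germ_cylinder/inG_iota.
split; first by exists A.
apply: nonempty_interior_not_singular A_interior _ => r /A_large/(le_lt_trans eps_ge0).
by rewrite normr_gt0.
Qed.
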